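(* Let $F$ be a field of characteristic two and let $(A,\sigma)$ be a totally decomposable central simple $F$-algebra of degree $2^n$ with orthogonal involution. If $n\geqslant2$ and $(A,\sigma)\not\simeq(M_{2^n}(F),t)$, then there exist an element $w\in\mathrm{Sym}(A,\sigma)\setminus(\mathrm{Alt}(A,\sigma)\oplus F)$ and a unit $u\in\mathrm{Alt}(A,\sigma)$ such that $u^2\in F^\times\setminus F^{\times2}$ and $uw=wu$.
   Context: Involutions are of the first kind; $t$ is the transpose involution. $(A,\sigma)$ is totally decomposable if it is isomorphic to a tensor product of quaternion $F$-algebras with involution. $\mathrm{Sym}(A,\sigma)=\{x\mid\sigma(x)=x\}$, $\mathrm{Alt}(A,\sigma)=\{\sigma(x)-x\mid x\in A\}$. *)

From HB Require Import structures.
From mathcomp Require Import all_boot all_order all_algebra all_field.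
Set Implicit Arguments.
Unset Strict Implicit.
Unset Printing Implicit Defensive.
Import GRing.Theory.
Local Open Scope ring_scope.

Section CSA.
Variables (F : fieldType) (A : falgType F).

Definition is_ideal_in (Q I : {vspace A}) : Prop :=
  (I <= Q)%VS /\ (Q * I <= I)%VS /\ (I * Q <= I)%VS.

Definition is_subalg (Q : {vspace A}) : Prop :=
  (1 <= Q)%VS /\ (Q * Q <= Q)%VS.

Definition central_simple_sub (Q : {vspace A}) : Prop :=
  is_subalg Q /\ 'Z(Q)%VS = 1%VS /\
  (forall I : {vspace A}, is_ideal_in Q I -> I = 0%VS \/ I = Q).

Definition central_simple : Prop := central_simple_sub fullv.

Definition degree (d : nat) : Prop := \dim (fullv : {vspace A}) = (d ^ 2)%N.

Definition involution_first_kind (s : A -> A) : Prop :=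
  [/\ forall x y, s (x + y) = s x + s y,
      forall x y, s (x * y) = s y * s x,
      forall x, s (s x) = x &
      forall c : F, s (c%:A) = c%:A].

Definition Sym (s : A -> A) (x : A) : Prop := s x = x.
Definition Alt (s : A -> A) (x : A) : Prop := exists y, x = s y - y.

(* In characteristic 2 an involution of the first kind on a central simple
   algebra is symplectic iff 1 \in Alt(A,s) (Knus-Merkurjev-Rost-Tignol,
   Prop. 2.6); orthogonal = not symplectic. *)
Definition orthogonal_char2 (s : A -> A) : Prop := ~ Alt s 1.

Definition sigma_quaternion_sub (s : A -> A) (Q : {vspace A}) : Prop :=
  central_simple_sub Q /\ \dim Q = 4%N /\ (forall x, x \in Q -> s x \in Q).

(* (A,s) is isomorphic to a tensor product of n quaternion algebras with
   involution: internally, n s-stable quaternion subalgebras which pairwise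
   centralise each other and generate A. *)
Definition totally_decomposable (s : A -> A) (n : nat) : Prop :=
  exists Q : 'I_n -> {vspace A},
    [/\ forall i, sigma_quaternion_sub s (Q i),
        forall i j, i != j -> forall x y, x \in Q i -> y \in Q j -> x * y = y * x &
        agenv (\sum_(i < n) Q i)%VS = fullv].

Definition iso_to_transpose (s : A -> A) (d : nat) : Prop :=
  exists f : A -> 'M[F]_d,
    bijective f /\
    [/\ forall x y, f (x + y) = f x + f y,
        forall (c : F) x, f (c *: x) = c *: f x,
        forall x y, f (x * y) = f x *m f y,
        f 1 = 1%:M &
        forall x, f (s x) = (f x)^T].

End CSA.

From HB Require Import structures.
From mathcomp Require Import all_boot all_order all_algebra all_field.
From mathcomp Require Import zify.
From Stdlib Require Import Classical.
Set Implicit Arguments.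
Unset Strict Implicit.
Unset Printing Implicit Defensive.
Import GRing.Theory.
Local Open Scope ring_scope.

(* On a sigma-stable quaternion subalgebra Q, orthogonality (1 is not
   alternating) makes Alt(Q) a line F v inside the 3-dimensional Sym(Q).
   The square v ^+ 2 commutes with Q, so it is a scalar c, and c != 0 because
   v normalizes the simple algebra Q.  If c is a square for every factor,
   symmetric idempotents of Q yield matrix units of Q on which sigma acts as
   the transpose; their products are matrix units of A, so (A, sigma) is
   (M_(2^n)(F), transpose).  Hence some factor Q_i has u = v with u ^+ 2 = c
   not a square.  In another factor Q_j there is a symmetric w outside
   Alt(Q_j) + F, and w commutes with u.  Writing A = Q_j (x) C, the linear
   form mu (x) ka, with mu separating w from Alt(Q_j) + F and ka(1) = 1
   vanishing on Alt(A), is sigma-invariant, hence vanishes on Alt(A) + F,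
   while it takes the value 1 at w. *)

Lemma pchar2_falg (F : fieldType) (A : falgType F) :
  2 \in [pchar F] -> 2 \in [pchar A].
Proof. exact: (rmorph_pchar (in_alg A)). Qed.

Section Involution.
Variables (F : fieldType) (A : falgType F) (s : A -> A).
Hypothesis sinv : involution_first_kind s.

Lemma sigmaD x y : s (x + y) = s x + s y. Proof. by case: sinv. Qed.
Lemma sigmaM x y : s (x * y) = s y * s x. Proof. by case: sinv. Qed.
Lemma sigmaK : involutive s. Proof. by case: sinv. Qed.
Lemma sigma_alg (c : F) : s c%:A = c%:A. Proof. by case: sinv. Qed.
Lemma sigma1 : s 1 = 1. Proof. by rewrite -(scale1r 1) sigma_alg. Qed.
Lemma sigmaZ (c : F) x : s (c *: x) = c *: s x.
Proof. by rewrite -mulr_algl sigmaM sigma_alg mulr_algr. Qed.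

Lemma sigma_is_linear : linear s.
Proof. by move=> c x y; rewrite sigmaD sigmaZ. Qed.

Definition sigma_fun : A -> A := s.
HB.instance Definition _ :=
  GRing.isLinear.Build F A A *:%R sigma_fun sigma_is_linear.
Definition sigmaL : 'End(A) := linfun sigma_fun.
Definition altL : 'End(A) := (sigmaL + \1)%VF.

Lemma sigmaB x y : s (x - y) = s x - s y. Proof. exact: (linearB sigma_fun). Qed.

Lemma sigmaLE x : sigmaL x = s x. Proof. exact: lfunE. Qed.
Lemma altLE x : altL x = s x + x.
Proof. by rewrite add_lfunE id_lfunE sigmaLE. Qed.

Lemma sigma_sum I r (P : pred I) (f : I -> A) :
  s (\sum_(i <- r | P i) f i) = \sum_(i <- r | P i) s (f i).
Proof. exact: (linear_sum sigma_fun). Qed.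

Lemma sigma_alt x : s (s x + x) = s x + x.
Proof. by rewrite sigmaD sigmaK addrC. Qed.

Lemma alt_conj x y : s (x * y * s x) + x * y * s x = x * (s y + y) * s x.
Proof. by rewrite !sigmaM sigmaK mulrA -mulrDl -mulrDr. Qed.

Lemma alt_mul_add x y :
  s (x * y) + x * y + (s (x * s y) + x * s y) = x * (s y + y) + (s y + y) * s x.
Proof.
by rewrite !sigmaM sigmaK mulrDr mulrDl [LHS](AC (2*2) ((4*2)*(1*3))).
Qed.

Hypothesis ch2 : 2 \in [pchar F].

Lemma AltE x : Alt s x <-> exists y, x = s y + y.
Proof. by split=> -[y ->]; exists y; rewrite (oppr_pchar2 (pchar2_falg A ch2)). Qed.

End Involution.

Section Functionals.
Variable F : fieldType.

Lemma separating_functional (vT : vectType F) (W : {vspace vT}) x :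
  x \notin W -> exists f : 'Hom(vT, F^o), f x = 1 /\ {in W, f =1 \0}.
Proof.
move=> xW; have capxW : (<[x]> :&: W = 0)%VS.
  apply/eqP; rewrite -subv0; apply/subvP => _ /memv_capP [/vlineP [k ->] Wkx].
  rewrite memv0 scaler_eq0; apply/orP; left; apply: contraNT xW => k0.
  by rewrite -[x](scalerK k0) memvZ.
have x0 : x != 0 by apply: contraNneq xW => ->; exact: mem0v.
pose f := @linfun _ vT F^o (coord [tuple x] 0 \o daddv_pi <[x]> W).
exists f; split => [|y Wy]; rewrite lfunE /=.
  by rewrite daddv_pi_id ?memv_line // (coord_free (0 : 'I_1)) // seq1_free.
have := daddv_pi_add capxW (subvP (addvSr _ _) _ Wy).
rewrite (daddv_pi_id _ Wy); last by rewrite capvC.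
by move/(canRL (addrK y)); rewrite subrr => ->; rewrite linear0.
Qed.

Variable A : falgType F.

Lemma tensor_functional (U V : {vspace A}) (mu ka : 'Hom(A, F^o)) :
  \dim (U * V) = (\dim U * \dim V)%N ->
  exists la : 'Hom(A, F^o), {in U & V, forall u v, la (u * v) = mu u * ka v}.
Proof.
move=> dimUV; pose X := vbasis U; pose Y := vbasis V.
pose P := [seq (x, y) | x <- X, y <- Y]; pose Z := [seq p.1 * p.2 | p <- P].
have sizeZ : size Z = (\dim U * \dim V)%N by rewrite size_map size_allpairs !size_tuple.
have freeZ : free Z.
  apply: (@basis_free _ _ (U * V)%VS); rewrite basisEdim sizeZ dimUV leqnn andbT.
  by rewrite /Z map_allpairs unlock.
pose beta k := mu (nth 0 P k).1 * ka (nth 0 P k).2.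
pose cZ k := @linfun _ A F^o (coord (in_tuple Z) k).
have cZE k z : cZ k z = coord (in_tuple Z) k z by rewrite lfunE.
pose la := \sum_(k < size Z) beta k *: cZ k.
have laE z : la z = \sum_(k < size Z) beta k * coord (in_tuple Z) k z.
  by rewrite sum_lfunE; apply: eq_bigr => k _; rewrite scale_lfunE cZE.
have coordZ (k l : 'I_(size Z)) : coord (in_tuple Z) k Z`_l = (l == k)%:R.
  exact: (coord_free (X := in_tuple Z) l k freeZ).
have laXY : {in X & Y, forall x y, la (x * y) = mu x * ka y}.
  move=> x y Xx Yy; have Pxy : (x, y) \in P by apply: allpairs_f.
  have kZ : (index (x, y) P < size Z)%N by rewrite size_map index_mem.
  have -> : x * y = Z`_(Ordinal kZ) by rewrite (nth_map 0) ?index_mem ?nth_index.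
  rewrite laE (bigD1 (Ordinal kZ)) //= big1 => [|k kZ'].
    by rewrite (coordZ _ (Ordinal kZ)) eqxx mulr1 addr0 /beta nth_index.
  by rewrite (coordZ _ (Ordinal kZ)) eq_sym (negbTE kZ') mulr0.
exists la => u v Uu Vv.
rewrite (coord_vbasis Uu) (coord_vbasis Vv) mulr_suml !linear_sum mulr_suml.
apply: eq_bigr => i _; rewrite mulr_sumr !linear_sum mulr_sumr; apply: eq_bigr => j _.
rewrite -scalerAl -scalerAr !linearZ /= laXY ?vbasis_mem ?mem_nth ?size_tuple //.
by rewrite -scalerAl -scalerAr.
Qed.

End Functionals.

Section InvariantFunctional.
Variables (F : fieldType) (A : falgType F) (s : A -> A).
Hypothesis sinv : involution_first_kind s.

Lemma invariant_functional_alt (la : 'Hom(A, F^o)) a c :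
  (forall x, la (s x) = la x) -> la 1 = 0 -> Alt s a -> la (a + c%:A) = 0.
Proof.
by move=> las la1 [y ->]; rewrite !linearD linearN linearZ /= las la1 subrr add0r scaler0.
Qed.

Lemma tensor_invariant_functional (Q C : {vspace A}) (mu : 'Hom(A, F^o)) :
  ~ Alt s 1 -> {in Q, forall x, s x \in Q} ->
  1 \in C -> {in C, forall x, s x \in C} -> (C <= 'C(Q))%VS ->
  (Q * C)%VS = fullv -> \dim (Q * C) = (\dim Q * \dim C)%N ->
  {in Q, forall q, mu (s q) = mu q} ->
  exists la : 'Hom(A, F^o), (forall x, la (s x) = la x) /\ {in Q, la =1 mu}.
Proof.
move=> horth sQ C1 sC CQ QC dimQC mus.
(* [la] is [mu (x) ka], where [ka 1 = 1] and [ka] vanishes on [Alt s]. *)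
have altL1 : 1 \notin limg (sigmaL s - \1)%VF.
  apply/negP => /memv_imgP [y _]; rewrite add_lfunE opp_lfunE id_lfunE (sigmaLE sinv).
  by move=> y1; apply: horth; exists y.
have [ka [ka1 kaAlt]] := separating_functional altL1.
have kas x : ka (s x) = ka x.
  have := memv_img (sigmaL s - \1)%VF (memvf x).
  rewrite add_lfunE opp_lfunE id_lfunE (sigmaLE sinv) => /kaAlt altx.
  by rewrite -[s x](subrK x) linearD /= altx add0r.
have [la laQC] := tensor_functional mu ka dimQC.
exists la; split; last by move=> q Qq; rewrite -{1}[q]mulr1 laQC // ka1 mulr1.
have : (Q * C <= lker (la \o sigmaL s - la)%VF)%VS.
  apply/prodvP => q c Qq Cc; rewrite memv_ker add_lfunE opp_lfunE comp_lfunE.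
  rewrite (sigmaLE sinv) (sigmaM sinv) (centvsP CQ _ _ (sC c Cc) (sQ q Qq)).
  by rewrite !laQC ?sQ ?sC // mus // kas subrr.
rewrite QC => /subvP sub x; apply/eqP; rewrite -subr_eq0.
by have := sub x (memvf x); rewrite memv_ker add_lfunE opp_lfunE comp_lfunE (sigmaLE sinv).
Qed.

End InvariantFunctional.

Section TransposeUnits.
Variables (F : fieldType) (A : falgType F) (s : A -> A).

Definition transpose_units (I : finType) (E : I -> I -> A) :=
  [/\ forall i j k l, E i j * E k l = (if j == k then E i l else 0),
      forall i j, s (E i j) = E j i & \sum_i E i i = 1].

Hypothesis sinv : involution_first_kind s.

Lemma transpose_units_mul (I J : finType) (E : I -> I -> A) (e : J -> J -> A) :
  transpose_units E -> transpose_units e ->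
  (forall i j a b, GRing.comm (E i j) (e a b)) ->
  transpose_units (fun p q : J * I => e p.1 q.1 * E p.2 q.2).
Proof.
move=> [EM Es E1] [eM es e1] Ee; split.
- move=> [a i] [b j] [c k] [d l] /=.
  rewrite mulrA -(mulrA (e a b)) Ee mulrA -mulrA eM EM xpair_eqE.
  by case: (b == c); case: (j == k); rewrite ?mul0r ?mulr0.
- by move=> [a i] [b j]; rewrite /= (sigmaM sinv) Es es Ee.
- rewrite -(pair_bigA _ (fun a i => e a a * E i i)) /= -e1.
  by apply: eq_bigr => a _; rewrite -mulr_sumr E1 mulr1.
Qed.

Lemma transpose_units_reindex (I J : finType) (h : J -> I) (E : I -> I -> A) :
  bijective h -> transpose_units E -> transpose_units (fun i j => E (h i) (h j)).
Proof.
move=> hbij [EM Es E1]; split=> [i j k l|i j|].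
- by rewrite EM (bij_eq hbij).
- exact: Es.
- by rewrite -E1 (reindex h) //; exact: onW_bij.
Qed.

Definition units2 (e v : A) (a b : bool) : A :=
  if a then (if b then 1 - e else v * e) else (if b then e * v else e).

Lemma transpose_units2 e v : e * e = e -> e * v + v * e = v -> v * v = 1 ->
  s e = e -> s v = v -> transpose_units (units2 e v).
Proof.
move=> ee evve vv se sv.
have ve : v * e = v - e * v by apply/eqP; rewrite eq_sym subr_eq addrC evve.
have eve : e * v * e = 0 by rewrite -mulrA ve mulrBr mulrA ee subrr.
have vev : v * e * v = 1 - e by rewrite ve mulrBl vv -mulrA vv mulr1.
have e1e : e * (1 - e) = 0 by rewrite mulrBr mulr1 ee subrr.
have e1e' : (1 - e) * e = 0 by rewrite mulrBl mul1r ee subrr.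
split.
- case; case; case; case => /=; rewrite ?mulrA ?ee ?eve ?vev ?mul0r ?mulr0 //.
  + by rewrite mulrBl mul1r mulrBr mulr1 ee subrr subr0.
  + by rewrite -mulrA mulrBl mul1r mulrA eve subr0.
  + by rewrite e1e' mul0r.
  + by rewrite -mulrA e1e mulr0.
  + by rewrite -(mulrA v e e) ee vev.
  + by rewrite -mulrA ee.
  + by rewrite mulrBr mulr1 eve subr0.
  + by rewrite -(mulrA e v v) vv mulr1 ee.
- by case; case; rewrite /= ?(sigmaM sinv) ?(sigmaB sinv) ?(sigma1 sinv) ?se ?sv.
- by rewrite big_bool /= subrK.
Qed.

End TransposeUnits.

Section TransposeIso.
Variables (F : fieldType) (A : falgType F) (s : A -> A) (d : nat).
Variable E : 'I_d -> 'I_d -> A.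
Hypotheses (sinv : involution_first_kind s) (HE : transpose_units s E).
Hypothesis dimA : \dim {:A} = (d ^ 2)%N.

Let EM i j k l : E i j * E k l = (if j == k then E i l else 0).
Proof. by case: HE. Qed.

Let sum_scale_if (k : 'I_d) (c : 'I_d -> F) (X : A) :
  \sum_i c i *: (if i == k then X else 0) = c k *: X.
Proof.
by rewrite (bigD1 k) //= eqxx big1 ?addr0 // => i /negbTE ->; rewrite scaler0.
Qed.

Definition mx_units (M : 'M[F]_d) : A := \sum_i \sum_j M i j *: E i j.

Lemma mx_units_is_linear : linear mx_units.
Proof.
move=> a M N; rewrite /mx_units scaler_sumr -big_split; apply: eq_bigr => i _ /=.
rewrite scaler_sumr -big_split; apply: eq_bigr => j _ /=.
by rewrite !mxE scalerDl scalerA.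
Qed.

HB.instance Definition _ :=
  GRing.isLinear.Build F 'M[F]_d A *:%R mx_units mx_units_is_linear.

Lemma mx_unitsM M N : mx_units (M *m N) = mx_units M * mx_units N.
Proof.
rewrite /mx_units mulr_suml; apply: eq_bigr => i _; rewrite mulr_suml.
under eq_bigr do rewrite mxE scaler_suml.
rewrite exchange_big; apply: eq_bigr => j _ /=; rewrite mulr_sumr.
under [RHS]eq_bigr do rewrite mulr_sumr.
under [RHS]eq_bigr do under eq_bigr do rewrite -scalerAl -scalerAr scalerA EM.
rewrite exchange_big /=; apply: eq_bigr => l _.
by rewrite -(sum_scale_if j (fun k => M i j * N k l)); apply: eq_bigr => k _; rewrite eq_sym.
Qed.

Lemma mx_units1 : mx_units 1%:M = 1.
Proof.
case: HE => _ _ <-; apply: eq_bigr => i _.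
rewrite (bigD1 i) //= mxE eqxx scale1r big1 ?addr0 // => j /negbTE ji.
by rewrite mxE eq_sym ji scale0r.
Qed.

Lemma mx_unitsT M : mx_units M^T = s (mx_units M).
Proof.
rewrite /mx_units (sigma_sum sinv) exchange_big; apply: eq_bigr => j _.
rewrite (sigma_sum sinv); apply: eq_bigr => i _.
by case: HE => _ Es _; rewrite mxE (sigmaZ sinv) Es.
Qed.

Lemma mx_units_coef M i j : E i i * mx_units M * E j j = M i j *: E i j.
Proof.
have EEE k l : E i i * E k l * E j j =
    if k == i then (if l == j then E i j else 0) else 0.
  by rewrite EM eq_sym; case: eqP; rewrite ?mul0r // EM.
rewrite /mx_units mulr_sumr mulr_suml.
under eq_bigr do rewrite mulr_sumr mulr_suml.
under eq_bigr do under eq_bigr do rewrite -scalerAr -scalerAl EEE.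
rewrite (bigD1 i) //= [X in _ + X]big1 => [|k /negbTE ki]; last first.
  by apply: big1 => l _; rewrite ki scaler0.
by rewrite addr0 eqxx sum_scale_if.
Qed.

Lemma transpose_units_neq0 i j : E i j != 0.
Proof.
have EE k l m : E k l * E l m = E k m by rewrite EM eqxx.
apply/eqP => Eij0; have Eii0 : E i i = 0 by rewrite -(EE i j i) Eij0 mul0r.
case: HE => _ _ /esym/eqP; rewrite big1 ?oner_eq0 // => k _.
by rewrite -(EE k i k) -(EE k i i) Eii0 mulr0 mul0r.
Qed.

Lemma mx_units_inj : injective mx_units.
Proof.
move=> M N eqMN; apply/matrixP => i j.
have /eqP := mx_units_coef M i j; rewrite eqMN mx_units_coef eq_sym -subr_eq0.
by rewrite -scalerBl scaler_eq0 (negbTE (transpose_units_neq0 i j)) orbF subr_eq0 => /eqP.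
Qed.

Definition mx_unitsL : 'Hom('M[F]_d, A) := linfun mx_units.

Lemma mx_unitsLE M : mx_unitsL M = mx_units M. Proof. exact: lfunE. Qed.

Lemma mx_unitsL_ker : lker mx_unitsL = 0%VS.
Proof. by apply/eqP/lker0P => M N; rewrite !mx_unitsLE => /mx_units_inj. Qed.

Lemma mx_unitsL_img : limg mx_unitsL = fullv.
Proof.
apply/eqP; rewrite eqEdim subvf limg_dim_eq ?mx_unitsL_ker ?capv0 //.
by rewrite dimA dimvf -mulnn; exact: leqnn.
Qed.

Lemma transpose_units_iso : iso_to_transpose s d.
Proof.
pose f := (mx_unitsL^-1)%VF.
have fK : cancel f mx_units.
  by move=> x; rewrite -mx_unitsLE limg_lfunVK // mx_unitsL_img memvf.
have gK : cancel mx_units f.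
  by move=> M; rewrite -mx_unitsLE lker0_lfunK // mx_unitsL_ker.
exists f; split; first by exists mx_units.
split=> [x y|c x|x y||x]; apply: mx_units_inj; rewrite ?fK //.
- by rewrite linearD /= !fK.
- by rewrite linearZ /= fK.
- by rewrite mx_unitsM !fK.
- by rewrite mx_units1.
- by rewrite mx_unitsT fK.
Qed.

End TransposeIso.

Lemma transpose_units_iso_card (F : fieldType) (A : falgType F) (s : A -> A)
    (I : finType) (E : I -> I -> A) :
  involution_first_kind s -> transpose_units s E ->
  \dim {:A} = (#|I| ^ 2)%N -> iso_to_transpose s #|I|.
Proof.
move=> sinv HE; apply: transpose_units_iso (fun i j => E (enum_val i) (enum_val j)) sinv _.
apply: transpose_units_reindex HE.
by exists enum_rank; [exact: enum_valK | exact: enum_rankK].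
Qed.

Lemma central_simple_normal_nilpotent (F : fieldType) (A : falgType F)
    (Q : {vspace A}) m :
  central_simple_sub Q -> m \in Q -> m * m = 0 ->
  (forall y, y \in Q -> exists2 z, z \in Q & m * y = z * m) -> m = 0.
Proof.
move=> [[Q1 QQ] [_ simpleQ]] Qm mm0 mQ; rewrite -memvE in Q1.
have QM x y : x \in Q -> y \in Q -> x * y \in Q.
  by move=> Qx Qy; apply: (subvP QQ); exact: memv_mul.
pose I := (Q * <[m]>)%VS.
have memI x : x \in Q -> x * m \in I by move=> Qx; rewrite memv_mul ?memv_line.
have idealI : is_ideal_in Q I.
  split; [|split]; apply/prodvP.
  - by move=> x y Qx /vlineP [k ->]; rewrite -scalerAr memvZ // QM.
  - by move=> x y Qx /memv_cosetP [q Qq ->]; rewrite mulrA memI // QM.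
  - move=> y x /memv_cosetP [q Qq ->] Qx; have [z Qz mxz] := mQ x Qx.
    by rewrite -mulrA mxz mulrA memI // QM.
case: (simpleQ I idealI) => [I0|IQ].
  by apply/eqP; have := memI 1 Q1; rewrite I0 memv0 mul1r.
have := Q1; rewrite -IQ => /memv_cosetP [q _ q1].
by rewrite -[m]mul1r q1 -mulrA mm0 mulr0.
Qed.

Section QuaternionSubalgebra.
Variables (F : fieldType) (A : falgType F) (s : A -> A) (Q : {vspace A}).
Hypothesis HQ : sigma_quaternion_sub s Q.

Lemma quat_mem1 : 1 \in Q.
Proof. by case: HQ => [[[Q1 _] _] _]; rewrite memvE. Qed.

Lemma quat_mulv : (Q * Q <= Q)%VS.
Proof. by case: HQ => [[[_ QQ] _] _]. Qed.

Lemma quat_memM x y : x \in Q -> y \in Q -> x * y \in Q.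
Proof. by move=> Qx Qy; apply: (subvP quat_mulv); exact: memv_mul. Qed.

Lemma quat_memJ x : x \in Q -> s x \in Q.
Proof. by case: HQ => _ [_]; apply. Qed.

Lemma quat_center : 'Z(Q)%VS = 1%VS.
Proof. by case: HQ => [[_ []]]. Qed.

Lemma quat_dim : \dim Q = 4%N.
Proof. by case: HQ => _ []. Qed.

End QuaternionSubalgebra.

Section QuaternionInvolution.
Variables (F : fieldType) (A : falgType F) (s : A -> A) (Q : {vspace A}).
Hypotheses (sinv : involution_first_kind s) (HQ : sigma_quaternion_sub s Q).
Hypotheses (ch2 : 2 \in [pchar F]) (horth : ~ Alt s 1).

Let ch2A := pchar2_falg A ch2.

Definition quat_alt := (altL s @: Q)%VS.
Definition quat_sym := (Q :&: lker (altL s))%VS.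

Lemma mem_quat_sym y : (y \in quat_sym) = (y \in Q) && (s y == y).
Proof.
by rewrite memv_cap memv_ker (altLE sinv) addr_eq0 (oppr_pchar2 ch2A).
Qed.

Lemma mem_quat_alt y : y \in Q -> s y + y \in quat_alt.
Proof. by move=> Qy; rewrite -(altLE sinv) memv_img. Qed.

Lemma quat_alt_sub_sym : (quat_alt <= quat_sym)%VS.
Proof.
apply/subvP => _ /memv_imgP [y Qy ->]; rewrite (altLE sinv) mem_quat_sym.
by rewrite (sigma_alt sinv) eqxx memvD ?(quat_memJ HQ) // andbT.
Qed.

Lemma quat_sym1 : 1 \in quat_sym.
Proof. by rewrite mem_quat_sym (quat_mem1 HQ) (sigma1 sinv) eqxx. Qed.

Lemma quat_alt1 : 1 \notin quat_alt.
Proof.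
apply/negP => /memv_imgP [y _]; rewrite (altLE sinv) => y1; apply: horth.
by apply/(AltE s ch2); exists y.
Qed.

Lemma quat_alt_neq0 : quat_alt != 0%VS.
Proof.
apply/negP => /eqP alt0.
have sQ y : y \in Q -> s y = y.
  move/mem_quat_alt; rewrite alt0 memv0 addr_eq0 (oppr_pchar2 ch2A).
  exact/eqP.
suff /dimvS : (Q <= 'Z(Q))%VS by rewrite (quat_center HQ) dimv1 (quat_dim HQ).
rewrite subv_cap subvv; apply/centvsP => x y Qx Qy.
by rewrite -[x * y]sQ ?(quat_memM HQ) // (sigmaM sinv) !sQ.
Qed.

Lemma dim_quat_alt_sym : (\dim quat_sym + \dim quat_alt = 4)%N.
Proof. by rewrite limg_ker_dim (quat_dim HQ). Qed.

Lemma dim_quat_alt : \dim quat_alt = 1%N.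
Proof.
have lt_alt_sym : (\dim quat_alt < \dim quat_sym)%N.
  rewrite ltn_neqAle dimvS ?quat_alt_sub_sym // andbT; apply/eqP => eqdim.
  have /eqP alt_sym : quat_alt == quat_sym by rewrite eqEdim quat_alt_sub_sym eqdim leqnn.
  by move: quat_alt1; rewrite alt_sym quat_sym1.
have := quat_alt_neq0; rewrite -dimv_eq0 -lt0n => alt_gt0.
have := dim_quat_alt_sym; lia.
Qed.

Lemma dim_quat_sym : \dim quat_sym = 3%N.
Proof. by have := dim_quat_alt_sym; rewrite dim_quat_alt; lia. Qed.

Section AltGenerator.
Variable v : A.
Hypotheses (altv : v \in quat_alt) (v0 : v != 0).

Lemma quat_alt_line : quat_alt = <[v]>%VS.
Proof.
by apply/eqP; rewrite eq_sym eqEdim -memvE altv dim_vline v0 dim_quat_alt.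
Qed.

Lemma quat_altP y : y \in Q -> exists c, s y + y = c *: v.
Proof. by move/mem_quat_alt; rewrite quat_alt_line => /vlineP. Qed.

Lemma quat_alt_gen : exists2 t, t \in Q & v = s t + t.
Proof. by case/memv_imgP: altv => t Qt ->; exists t; rewrite ?(altLE sinv). Qed.

Lemma quat_alt_mem : v \in Q.
Proof. by have [t Qt ->] := quat_alt_gen; exact: memvD (quat_memJ HQ Qt) Qt. Qed.

Lemma quat_alt_symmetric : s v = v.
Proof. by have [t _ ->] := quat_alt_gen; exact: sigma_alt. Qed.

Lemma quat_alt_conj x : x \in Q -> exists l, x * v * s x = l *: v.
Proof.
move=> Qx; have [t Qt vt] := quat_alt_gen.
have [l altl] := quat_altP (quat_memM HQ (quat_memM HQ Qx Qt) (quat_memJ HQ Qx)).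
by exists l; rewrite -altl (alt_conj sinv) -vt.
Qed.

Lemma quat_alt_twist x : x \in Q -> exists l, x * v + v * s x = l *: v.
Proof.
move=> Qx; have [t Qt vt] := quat_alt_gen.
have [a alta] := quat_altP (quat_memM HQ Qx Qt).
have [b altb] := quat_altP (quat_memM HQ Qx (quat_memJ HQ Qt)).
by exists (a + b); rewrite scalerDl -alta -altb (alt_mul_add sinv) -vt.
Qed.

Lemma quat_alt_normal y : y \in Q -> exists2 z, z \in Q & v * y = z * v.
Proof.
move=> Qy; have [l yl] := quat_alt_twist (quat_memJ HQ Qy).
rewrite (sigmaK sinv) in yl; exists (s y + l%:A).
  by rewrite memvD ?(quat_memJ HQ) // memvZ // (quat_mem1 HQ).
by rewrite mulrDl mulr_algl -yl (addKr_pchar2 ch2A).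
Qed.

Lemma quat_alt_sqr : exists2 c, c != 0 & v * v = c%:A.
Proof.
have vvZ : v * v \in 'Z(Q)%VS.
  rewrite memv_cap (quat_memM HQ) ?quat_alt_mem //=; apply/centvP => x Qx.
  have [l xl] := quat_alt_twist Qx; have [a xa] := quat_altP Qx.
  have Kv : x * v + v * x = l *: v + a *: (v * v).
    by rewrite -xl scalerAr -xa mulrDr addrA (addrK_pchar2 ch2A).
  have : v * (x * v + v * x) = (x * v + v * x) * v.
    by rewrite Kv mulrDr mulrDl -!scalerAr -!scalerAl !mulrA.
  by rewrite mulrDr mulrDl !mulrA [RHS]addrC => /addrI.
have [c vvc] : exists c, v * v = c%:A by move: vvZ; rewrite (quat_center HQ) => /vlineP.
exists c => //; apply: contra_neq v0 => c0.
apply: (central_simple_normal_nilpotent HQ.1 quat_alt_mem); last exact: quat_alt_normal.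
by rewrite vvc c0 scale0r.
Qed.

Hypothesis vv1 : v * v = 1.

Lemma quat_alt_1D_sqr : (1 + v) * (1 + v) = 0.
Proof. by rewrite mulrDl mul1r mulrDr mulr1 vv1 [v + 1]addrC (addrr_pchar2 ch2A). Qed.

Lemma quat_alt_1D_neq0 : 1 + v != 0.
Proof.
apply: contraNneq quat_alt1 => /eqP; rewrite addr_eq0 (oppr_pchar2 ch2A).
by move/eqP->.
Qed.

Lemma quat_alt_gen_twist t : t \in Q -> v = s t + t ->
  exists l, t * v + v * t = l *: v + 1 /\ s (t * v) + t * v = l *: v.
Proof.
move=> Qt vt; have st : s t = v + t by rewrite vt (addrK_pchar2 ch2A).
have [l tl] := quat_alt_twist Qt; exists l.
have tvD : t * v + v * t = l *: v + 1.
  by rewrite -tl st mulrDr vv1 addrCA [1 + _]addrC (addrK_pchar2 ch2A).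
split=> //; rewrite (sigmaM sinv) quat_alt_symmetric st mulrDr vv1 -addrA.
by rewrite (addrC (v * t)) tvD addrCA (addrr_pchar2 ch2A) addr0.
Qed.

Lemma quat_sym_noncomm : exists r, [/\ r \in Q, s r = r & r * v != v * r].
Proof.
apply: NNPP => noncomm.
(* Otherwise [1 + v] would be a nonzero square-zero element normalizing [Q]. *)
have comm r : r \in Q -> s r = r -> r * v = v * r.
  by move=> Qr sr; apply/eqP/negPn/negP => nc; apply: noncomm; exists r.
have [t Qt vt] := quat_alt_gen; have [l [tvD alt_tv]] := quat_alt_gen_twist Qt vt.
have st : s t = v + t by rewrite vt (addrK_pchar2 ch2A).
have twist y a : y \in Q -> s y + y = a *: v -> y * v + v * y = a *: (l *: v + 1).
  move=> Qy ya; pose z := y + a *: t.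
  have sz : s z = z.
    rewrite (sigmaD sinv) (sigmaZ sinv) st -[s y](addrK_pchar2 ch2A y) ya.
    by rewrite scalerDr addrACA (addrr_pchar2 ch2A) add0r.
  have -> : y = z + a *: t by rewrite /z (addrK_pchar2 ch2A).
  rewrite mulrDl mulrDr comm ?memvD ?memvZ // addrACA (addrr_pchar2 ch2A) add0r.
  by rewrite -scalerAl -scalerAr -scalerDr tvD.
have l1 : l = 1.
  have := twist _ _ (quat_memM HQ Qt quat_alt_mem) alt_tv.
  rewrite -mulrA vv1 mulr1 mulrA -[v * t](addKr_pchar2 ch2A (t * v)) tvD mulrDl.
  rewrite -mulrA vv1 mulr1 addrA (addrr_pchar2 ch2A) add0r mulrDl -scalerAl vv1.
  rewrite mul1r scalerDr scalerA [RHS]addrC => /addrI /esym /eqP.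
  rewrite -subr_eq0 -{2}[v]scale1r -scalerBl scaler_eq0 (negbTE v0) orbF subr_eq0.
  by rewrite -expr2 sqrf_eq1 (oppr_pchar2 ch2) orbb => /eqP.
apply: (negP quat_alt_1D_neq0); apply/eqP/(central_simple_normal_nilpotent HQ.1).
- by rewrite memvD ?(quat_mem1 HQ) ?quat_alt_mem.
- exact: quat_alt_1D_sqr.
move=> y Qy; have [a ya] := quat_altP Qy.
exists (y + a%:A); first by rewrite memvD // memvZ // (quat_mem1 HQ).
have := twist y a Qy ya; rewrite l1 scale1r [v + 1]addrC => yvm.
rewrite mulrDl mul1r -[v * y](addKr_pchar2 ch2A (y * v)) yvm.
by rewrite mulrDl mulr_algl mulrDr mulr1 addrA.
Qed.

Lemma quat_sym_anticomm : exists r, [/\ r \in Q, s r = r & r * v + v * r = v].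
Proof.
have [r [Qr sr nc]] := quat_sym_noncomm.
have [l rl] := quat_alt_twist Qr; rewrite sr in rl.
have l0 : l != 0.
  apply: contraNneq nc => l0; apply/eqP.
  by rewrite -(addrK_pchar2 ch2A (v * r) (r * v)) rl l0 scale0r add0r.
exists (l^-1 *: r); split; first by rewrite memvZ.
  by rewrite (sigmaZ sinv) sr.
by rewrite -scalerAl -scalerAr -scalerDr rl scalerA mulVf // scale1r.
Qed.

Lemma quat_alt_transpose_units :
  exists2 E : bool -> bool -> A, forall a b, E a b \in Q & transpose_units s E.
Proof.
have [r [Qr sr rv]] := quat_sym_anticomm.
have [k rvr] := quat_alt_conj Qr; rewrite sr in rvr.
have vr : v * r = v + r * v by rewrite -{2}rv [r * v + _]addrC (addrK_pchar2 ch2A).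
have rr : r * r = k%:A + r.
  have : (r * r + r) * v = k *: v by rewrite -rvr -mulrA vr mulrDr mulrA mulrDl addrC.
  move/(congr1 (fun x => x * v)); rewrite -mulrA vv1 mulr1 -scalerAl vv1 => <-.
  by rewrite (addrK_pchar2 ch2A).
pose m := 1 + v; pose e := r + k *: m.
have mm : m * m = 0 := quat_alt_1D_sqr.
have rm : r * m + m * r = v.
  by rewrite /m mulrDr mulrDl mulr1 mul1r addrACA (addrr_pchar2 ch2A) add0r.
have mv : m * v = v * m by rewrite /m mulrDl mulrDr mul1r mulr1.
have ee : e * e = e.
  rewrite /e mulrDl !mulrDr -!scalerAl -!scalerAr mm !scaler0 addr0.
  by rewrite -addrA -scalerDr rm rr /m scalerDr addrAC addrC.
have ev : e * v + v * e = v.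
  rewrite /e mulrDl mulrDr -scalerAl -scalerAr mv addrACA rv.
  by rewrite (addrr_pchar2 ch2A) addr0.
have Qe : e \in Q by rewrite memvD // memvZ // memvD ?(quat_mem1 HQ) ?quat_alt_mem.
have se : s e = e.
  by rewrite (sigmaD sinv) (sigmaZ sinv) sr (sigmaD sinv) (sigma1 sinv) quat_alt_symmetric.
exists (units2 e v); last exact: transpose_units2 quat_alt_symmetric.
have Qv := quat_alt_mem.
by case; case; rewrite /units2 ?(quat_memM HQ) // memvB // (quat_mem1 HQ).
Qed.

End AltGenerator.

Lemma quat_dichotomy :
  (exists y c, [/\ y \in Q, c != 0, (s y + y) ^+ 2 = c%:A & ~ exists d, c = d ^+ 2])
  \/ exists2 E : bool -> bool -> A, forall a b, E a b \in Q & transpose_units s E.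
Proof.
pose v := vpick quat_alt; have altv : v \in quat_alt := memv_pick quat_alt.
have v0 : v != 0 by rewrite vpick0 quat_alt_neq0.
have [c c0 vvc] := quat_alt_sqr altv v0; have [t Qt vt] := quat_alt_gen altv.
case: (classic (exists d, c = d ^+ 2)) => [[d cd]|nsq]; last first.
  by left; exists t, c; rewrite -vt expr2 vvc.
right; have d0 : d != 0 by apply: contraNneq c0 => d0; rewrite cd d0 expr0n.
apply: (@quat_alt_transpose_units (d^-1 *: v)); first by rewrite memvZ.
  by rewrite scaler_eq0 invr_eq0 negb_or d0.
rewrite -scalerAl -scalerAr !scalerA vvc scalerA -expr2 exprVn -cd mulVf //.
exact: scale1r.
Qed.

Lemma quat_sym_functional : exists w (mu : 'Hom(A, F^o)),
  [/\ w \in Q, s w = w, mu w = 1, mu 1 = 0 & {in Q, forall q, mu (s q) = mu q}].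
Proof.
pose v := vpick quat_alt; have altv : v \in quat_alt := memv_pick quat_alt.
have v0 : v != 0 by rewrite vpick0 quat_alt_neq0.
pose W := (<[v]> + 1)%VS.
have dimW : (\dim W <= 2)%N.
  by rewrite (leq_trans (dimv_add_leqif _ _).1) // dim_vline dimv1 v0.
have [w symw wW] : exists2 w, w \in quat_sym & w \notin W.
  by apply/subvPn/negP => /dimvS; rewrite dim_quat_sym => /leq_trans/(_ dimW).
have [mu [muw muW]] := separating_functional wW.
move: symw; rewrite mem_quat_sym => /andP [Qw /eqP sw].
exists w, mu; split=> //; first by rewrite muW // (subvP (addvSr _ _)) // memv_line.
move=> q Qq; have [c qc] := quat_altP altv v0 Qq.
have -> : s q = c *: v + q by rewrite -qc (addrK_pchar2 ch2A).
by rewrite linearD /= muW ?add0r // (subvP (addvSl _ _)) // memvZ ?memv_line.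
Qed.

End QuaternionInvolution.

Section CommutingQuaternions.
Variables (F : fieldType) (A : falgType F) (s : A -> A) (n : nat).
Variable Q : 'I_n -> {vspace A}.
Hypotheses (sinv : involution_first_kind s)
  (HQ : forall i, sigma_quaternion_sub s (Q i))
  (Qcomm : forall i j, i != j -> {in Q i & Q j, commutative *%R}).

Definition quat_prod (r : seq 'I_n) : {vspace A} := (\big[@prodv _ A/1%VS]_(k <- r) Q k)%VS.

Lemma quat_prod_cons k r : quat_prod (k :: r) = (Q k * quat_prod r)%VS.
Proof. by rewrite /quat_prod big_cons. Qed.

Lemma quat_prod_mem1 r : 1 \in quat_prod r.
Proof.
elim: r => [|k r IHr]; first by rewrite /quat_prod big_nil memv_line.
by rewrite quat_prod_cons -[1]mulr1 memv_mul // (quat_mem1 (HQ k)).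
Qed.

Lemma quat_prod_cent r l : l \notin r -> (quat_prod r <= 'C(Q l))%VS.
Proof.
elim: r => [|k r IHr]; first by rewrite /quat_prod big_nil -memvE centv1.
rewrite inE negb_or quat_prod_cons eq_sym => /andP [kl lr].
apply: prodv_sub (IHr lr); apply/centvsP => x y Qx Qy; exact: Qcomm kl _ _ Qx Qy.
Qed.

Lemma quat_prod_sub r k : k \in r -> (Q k <= quat_prod r)%VS.
Proof.
elim: r => [//|l r IHr]; rewrite inE quat_prod_cons => /predU1P [->|kr].
  by rewrite -{1}[Q l]prodv1 prodvSr // -memvE quat_prod_mem1.
by rewrite -[Q k]prod1v prodvS // ?IHr // -memvE (quat_mem1 (HQ l)).
Qed.

Lemma quat_prod_mulv r : uniq r -> (quat_prod r * quat_prod r <= quat_prod r)%VS.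
Proof.
elim: r => [_|k r IHr /andP [kr /IHr XX]]; first by rewrite /quat_prod big_nil prodv1.
set X := quat_prod r in XX *; rewrite quat_prod_cons.
have XQ : (X * Q k <= Q k * X)%VS.
  apply/prodvP => x q Xx Qq; rewrite (centvsP (quat_prod_cent kr) x q Xx Qq).
  exact: memv_mul.
rewrite prodvA -(prodvA _ X) (subv_trans (prodvSl _ (prodvSr _ XQ))) //.
by rewrite prodvA -prodvA prodvS ?(quat_mulv (HQ k)).
Qed.

Lemma quat_prod_memJ r : uniq r -> {in quat_prod r, forall x, s x \in quat_prod r}.
Proof.
elim: r => [_ x|k r IHr /andP [kr /IHr sX]].
  rewrite /quat_prod big_nil => /vlineP [c ->].
  by rewrite (sigmaZ sinv) (sigma1 sinv) memvZ ?memv_line.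
have : (Q k * quat_prod r <= sigmaL s @^-1: (Q k * quat_prod r))%VS.
  apply/prodvP => x y Qx Xy; rewrite -memv_preim (sigmaLE sinv) (sigmaM sinv).
  have Qsx := quat_memJ (HQ k) Qx.
  by rewrite (centvsP (quat_prod_cent kr) _ _ (sX y Xy) Qsx) memv_mul ?sX.
by rewrite quat_prod_cons => /subvP XJ x /XJ; rewrite -memv_preim (sigmaLE sinv).
Qed.

Lemma quat_prod_dim r : (\dim (quat_prod r) <= 4 ^ size r)%N.
Proof.
elim: r => [|k r IHr]; first by rewrite /quat_prod big_nil dimv1.
rewrite quat_prod_cons expnS (leq_trans (dim_prodv _ _)) // (quat_dim (HQ k)).
by rewrite leq_mul2l.
Qed.

Lemma quat_prod_transpose_units r : uniq r ->
  (forall i, exists2 e : bool -> bool -> A,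
     forall a b, e a b \in Q i & transpose_units s e) ->
  exists (I : finType) (E : I -> I -> A),
    [/\ #|I| = (2 ^ size r)%N, transpose_units s E &
        forall i j, E i j \in quat_prod r].
Proof.
move=> + split; elim: r => [_|k r IHr /andP [kr /IHr [I [E [cardI HE XE]]]]].
  exists unit, (fun _ _ => 1); split=> [||[] []]; last exact: quat_prod_mem1.
    by rewrite card_unit.
  split=> [[] [] [] []|[] []|]; rewrite ?mulr1 ?(sigma1 sinv) //.
  by rewrite (big_pred1 tt) // => -[].
have [e Qe He] := split k.
exists (bool * I)%type, (fun p q => e p.1 q.1 * E p.2 q.2); split.
- by rewrite card_prod card_bool cardI expnS.
- apply: transpose_units_mul => // i j a b.
  exact: (centvsP (quat_prod_cent kr) _ _ (XE i j) (Qe a b)).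
- by move=> p q; rewrite quat_prod_cons memv_mul.
Qed.

Hypothesis gen : agenv (\sum_(i < n) Q i)%VS = fullv.
Hypothesis dimA : \dim {:A} = (4 ^ n)%N.

Lemma quat_prod_full r : uniq r -> (forall i, i \in r) -> quat_prod r = fullv.
Proof.
move=> ur rT; apply/eqP; rewrite eqEdim subvf /= -{1}gen dimvS //.
apply: agenv_sub_modl; first by rewrite -memvE quat_prod_mem1.
apply: subv_trans (prodvSl _ _) (quat_prod_mulv ur).
by apply/subv_sumP => i _; exact: quat_prod_sub.
Qed.

Lemma quat_complement j :
  exists C : {vspace A}, [/\ 1 \in C, {in C, forall x, s x \in C},
    (C <= 'C(Q j))%VS, (Q j * C)%VS = fullv &
    \dim (Q j * C) = (\dim (Q j) * \dim C)%N].
Proof.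
pose r := rem j (enum 'I_n).
have ur : uniq (j :: r) by rewrite /= mem_rem_uniqF ?rem_uniq ?enum_uniq.
have jr : j \notin r by case/andP: ur.
have rT i : i \in j :: r by rewrite inE mem_rem_uniq ?enum_uniq // inE mem_enum andbT orbN.
have QjC := quat_prod_full ur rT; rewrite quat_prod_cons in QjC.
exists (quat_prod r); split.
- exact: quat_prod_mem1.
- by apply: quat_prod_memJ; case/andP: ur.
- exact: quat_prod_cent.
- exact: QjC.
apply/eqP; rewrite eqn_leq dim_prodv QjC dimvf /= -dimvf dimA (quat_dim (HQ j)).
have := quat_prod_dim r; rewrite size_rem ?mem_enum // size_enum_ord => dimC.
have n_gt0 : (0 < n)%N := leq_ltn_trans (leq0n j) (ltn_ord j).
by rewrite -(prednK n_gt0) expnS leq_mul2l dimC orbT.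
Qed.

Lemma quat_split_iso :
  (forall i, exists2 E : bool -> bool -> A,
     forall a b, E a b \in Q i & transpose_units s E) ->
  iso_to_transpose s (2 ^ n).
Proof.
move=> split; have [I [E [cardI HE _]]] := quat_prod_transpose_units (enum_uniq 'I_n) split.
rewrite size_enum_ord in cardI; rewrite -cardI.
by apply: transpose_units_iso_card sinv HE _; rewrite cardI dimA -expnM mulnC expnM.
Qed.

Lemma quat_sym_notin_alt_scalar j : 2 \in [pchar F] -> ~ Alt s 1 ->
  exists w, [/\ w \in Q j, s w = w & ~ exists a (c : F), Alt s a /\ w = a + c%:A].
Proof.
move=> ch2 horth.
have [w [mu [Qw sw muw mu1 mus]]] := quat_sym_functional sinv (HQ j) ch2 horth.
have [C [C1 sC CQ QC dimQC]] := quat_complement j.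
have [la [las laQ]] :=
  tensor_invariant_functional sinv horth (quat_memJ (HQ j)) C1 sC CQ QC dimQC mus.
have la1 : la 1 = 0 by rewrite laQ ?(quat_mem1 (HQ j)).
exists w; split=> // -[a [c [alta wa]]].
have := invariant_functional_alt c las la1 alta.
by rewrite -wa laQ // muw => /eqP; rewrite oner_eq0.
Qed.

End CommutingQuaternions.

Theorem lemma6p1 (F : fieldType) (A : falgType F) (sigma : A -> A) (n : nat) :
  (2 \in [pchar F])%N ->
  central_simple A ->
  degree A (2 ^ n) ->
  involution_first_kind sigma ->
  orthogonal_char2 sigma ->
  totally_decomposable sigma n ->
  (2 <= n)%N ->
  ~ iso_to_transpose sigma (2 ^ n) ->
  exists w u : A,
    [/\ Sym sigma w /\ ~ (exists a (c : F), Alt sigma a /\ w = a + c%:A),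
        Alt sigma u,
        u \is a GRing.unit,
        (exists c : F, [/\ c != 0, u ^+ 2 = c%:A & ~ (exists d : F, c = d ^+ 2)]) &
        u * w = w * u].
Proof.
move=> ch2 _ degA sinv horth [Q [HQ Qcomm gen]] n_ge2 not_iso.
have dimA : \dim {:A} = (4 ^ n)%N by rewrite degA -expnM mulnC expnM.
case: (classic (exists i, exists y c, [/\ y \in Q i, c != 0,
    (sigma y + y) ^+ 2 = c%:A & ~ exists d, c = d ^+ 2])) => [|nonsplit]; last first.
  case: not_iso; apply: (quat_split_iso sinv HQ Qcomm dimA) => i.
  have [nsplit_i|//] := quat_dichotomy sinv (HQ i) ch2 horth.
  by case: nonsplit; exists i.
move=> [i [y [c [Qy c0 yc nsq]]]].
have [j ij] : exists j : 'I_n, i != j.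
  pose j0 := Ordinal (ltnW n_ge2); pose j1 := Ordinal n_ge2.
  by case: (eqVneq i j0) => [->|]; [exists j1 | exists j0].
have [w [Qw sw w_notin]] := quat_sym_notin_alt_scalar sinv HQ Qcomm gen dimA j ch2 horth.
exists w, (sigma y + y); split=> //.
- by apply/(AltE sigma ch2); exists y.
- apply/unitrP; exists (c^-1 *: (sigma y + y)).
  by rewrite -scalerAl -scalerAr -expr2 yc scalerA mulVf // scale1r.
- by exists c.
- exact: Qcomm i j ij _ _ (memvD (quat_memJ (HQ i) Qy) Qy) Qw.
Qed.
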